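(* Let $Y(0),Y(1)$ be integrable real potential outcomes and $X$ a random vector in $\mathbb{R}^{d_X}$ with support $\mathcal{X}=\mathcal{X}_0\cup\mathcal{X}_1$, $\mathcal{X}_0\cap\mathcal{X}_1=\emptyset$, with $D=1\{X\in\mathcal{X}_1\}$ and $Y=DY(1)+(1-D)Y(0)$. Write $X=(X^{(1)},X^{(2)})$ for a fixed split of the coordinates and correspondingly $x=(x^{(1)},x^{(2)})$. Suppose $x\mapsto E[Y(d)|X=x]$ is continuous on $\mathcal{X}$ for $d=0,1$, and conditional local comonotonicity holds: for every $x_1\in\mathcal{X}$ there is a neighborhood $N$ of $x_1$ such that for all $x_2\in N\cap\mathcal{X}$ with $x_2^{(2)}=x_1^{(2)}$, $$E[Y(1)|X=x_1]\geq E[Y(1)|X=x_2]\iff E[Y(0)|X=x_1]\geq E[Y(0)|X=x_2].$$ Let $\mathcal{F}=\mathrm{cl}(\mathrm{int}(\mathcal{X}_1))\cap\mathrm{cl}(\mathrm{int}(\mathcal{X}_0))$ and for $d\in\{0,1\}$ let $g_d$ be a function on $\mathcal{X}_d\cup\mathcal{F}$ with $g_d(x)=E[Y|X=x]$ for $x\in\mathcal{X}_d$ and continuous at each point of $\mathcal{F}$. Suppose that for some $d$ and some $x\in\mathcal{X}_d$ there is a continuous path $p:[0,1]\to\mathcal{X}_d\cup\mathcal{F}$ with $p(0)=x$, $p(1)=x^*\in\mathcal{F}$, $p(t)^{(2)}=x^{(2)}$ for all $t\in[0,1]$, and $E[Y|X=p(t)]=E[Y|X=x]$ for all $t\in(0,1)$.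 Then $E[Y(1)|X=x]=g_1(x^* )$ and $E[Y(0)|X=x]=g_0(x^* )$.
   Context: Conditional expectation functions are understood as the unique continuous versions; for $z\in\mathcal{X}$, $E[Y|X=z]$ equals $E[Y(d)|X=z]$ when $z\in\mathcal{X}_d$. *)

From HB Require Import structures.
From mathcomp Require Import all_boot all_order all_algebra.
From mathcomp Require Import all_classical all_reals all_analysis.
Set Implicit Arguments. Unset Strict Implicit. Unset Printing Implicit Defensive.
Import Order.TTheory GRing.Theory Num.Theory.
Import numFieldNormedType.Exports.
Local Open Scope classical_set_scope.
Local Open Scope ring_scope.

(* Covariate space R^(n1+n2), split as x = (x^(1), x^(2)) with
   x^(2) = rsubmx x (the last n2 coordinates). *)
Definition xsnd (R : realType) (n1 n2 : nat) (x : 'rV[R]_(n1 + n2)) : 'rV[R]_n2 :=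
  rsubmx x.

(* Observed CEF: E[Y|X=z] = E[Y(1)|X=z] on X_1, E[Y(0)|X=z] on X_0
   (m1, m0 are the continuous versions of x |-> E[Y(d)|X=x]). *)
Definition obsCEF (R : realType) (n : nat) (X1 : set 'rV[R]_n)
  (m0 m1 : 'rV[R]_n -> R) (z : 'rV[R]_n) : R :=
  if `[< X1 z >] then m1 z else m0 z.

Definition frontier_set (R : realType) (n : nat) (X0 X1 : set 'rV[R]_n)
  : set 'rV[R]_n :=
  closure (interior X1) `&` closure (interior X0).

From HB Require Import structures.
From mathcomp Require Import all_boot all_order all_algebra.
From mathcomp Require Import all_classical all_reals all_analysis.
Import Order.TTheory GRing.Theory Num.Theory.
Import numFieldNormedType.Exports.
Local Open Scope classical_set_scope.
Local Open Scope ring_scope.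
Set Implicit Arguments. Unset Strict Implicit. Unset Printing Implicit Defensive.

(* On the frontier F, g_d agrees with the continuous version m_d of
   E[Y(d)|X=.], because F lies in the closure of X_d inside the closed set X.
   It thus suffices to show that f = m_1 o p and h = m_0 o p are constant.
   Along the path the observed CEF keeps its value c at x, so at each time f or
   h equals c.  If both do at t, comonotonicity makes t a local maximum of f; if
   only one does, continuity keeps the other away from c near t, so the first
   one stays equal to c there and again t is a local maximum of f.  A continuous
   function all of whose points are local maxima on a connected set is
   constant, and comonotonicity then transfers local maximality, hence
   constancy, to h.  This is done on [0, 1); continuity at 1 gives the values
   at the frontier point. *)

Section LocalExtrema.
Context {R : realFieldType} {T : topologicalType}.
Implicit Types (A : set T) (f g h : T -> R).

Definition locally_comonotone A f h :=
  forall t, A t -> \forall s \near t, A s -> (f s <= f t <-> h s <= h t).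

Definition locally_maximal_on A g :=
  forall t, A t -> \forall s \near t, A s -> g s <= g t.

Lemma cvg_near_neq (F : set_system T) g (l c : R) :
  g @ F --> l -> l != c -> \forall s \near F, g s != c.
Proof.
by move=> gl lc; apply: (gl [set x | x != c]); apply: open_nbhs_nbhs; split=> //;
  exact: open_neq.
Qed.

Lemma connected_locally_maximal_const A g :
  connected A -> {within A, continuous g} -> locally_maximal_on A g ->
  forall s t, A s -> A t -> g s = g t.
Proof.
move=> Acon /subspace_continuousP gc gmax.
suff le_g y t0 : A t0 -> g t0 <= y -> forall t, A t -> g t <= y.
  move=> s t As At; apply/eqP; rewrite eq_le.
  by rewrite (le_g _ _ At (lexx _) _ As) (le_g _ _ As (lexx _) _ At).
move=> At0 gt0y; set B := A `&` [set t | g t <= y].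
suff BA : B = A by move=> t; rewrite -BA => -[].
apply: Acon; first by exists t0.
- exists (interior (~` A `|` [set t | g t <= y])); first exact: open_interior.
  apply/seteqP; split=> t; last by move=> [At /nbhs_singleton [|]].
  move=> [At gty]; split=> //; apply: filterS (gmax t At) => s gst.
  by have [As|] := pselect (A s); [right; exact: le_trans (gst As) gty | left].
- exists (closure B); first exact: closed_closure.
  apply/seteqP; split=> [t Bt|t [At clBt]].
    by split; [case: Bt | exact: subset_closure].
  split=> //=; rewrite leNgt; apply/negP => ygt.
  have /clBt [s [[As gsy] /(_ As)]] : \forall s \near t, A s -> y < g s.
    apply: (gc t At [set r | y < r]); apply: open_nbhs_nbhs.
    by split=> //; exact: open_gt.
  by rewrite ltNge gsy.
Qed.

Lemma comonotone_locally_maximal A f h c :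
  {within A, continuous f} -> {within A, continuous h} ->
  locally_comonotone A f h -> (forall t, A t -> f t = c \/ h t = c) ->
  locally_maximal_on A f.
Proof.
move=> /subspace_continuousP fc /subspace_continuousP hc com fh t At.
rewrite /from_subspace in fc hc.
have [ftc|ftc] := eqVneq (f t) c.
- have [htc|htc] := eqVneq (h t) c.
  + apply: filterS (com t At) => s fhs As.
    by case: (fh s As) => [->|hs]; [rewrite ftc | apply/(fhs As); rewrite hs htc].
  + have := cvg_near_neq (hc t At) htc; rewrite near_withinE.
    apply: filterS => s hs As.
    by case: (fh s As) => [->|hsc]; [rewrite ftc | move: (hs As); rewrite hsc eqxx].
- have htc : h t = c by case: (fh t At) => // ftc'; move: ftc; rewrite ftc' eqxx.
  have := cvg_near_neq (fc t At) ftc; rewrite near_withinE.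
  apply: filterS2 (com t At) => s fhs fs As.
  case: (fh s As) => [fsc|hsc]; first by move: (fs As); rewrite fsc eqxx.
  by apply/(fhs As); rewrite hsc htc.
Qed.

Lemma connected_comonotone_const A f h c :
  connected A -> {within A, continuous f} -> {within A, continuous h} ->
  locally_comonotone A f h -> (forall t, A t -> f t = c \/ h t = c) ->
  forall s t, A s -> A t -> f s = f t /\ h s = h t.
Proof.
move=> Acon fc hc com fh.
have fconst := connected_locally_maximal_const Acon fc
  (comonotone_locally_maximal fc hc com fh).
have hmax : locally_maximal_on A h.
  move=> t At; apply: filterS (com t At) => s fhs As.
  by apply/(fhs As); rewrite (fconst s t As At).
move=> s t As At; split; first exact: fconst.
exact: (connected_locally_maximal_const Acon hc hmax).
Qed.

End LocalExtrema.

Section ContinuityWithin.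
Context {S T U : topologicalType}.

Lemma within_continuous_comp_within (A : set S) (B : set T) (p : S -> T)
    (m : T -> U) :
  {within A, continuous p} -> (forall s, A s -> B (p s)) ->
  {within B, continuous m} -> {within A, continuous (m \o p)}.
Proof.
move=> /subspace_continuousP pc pAB /subspace_continuousP mc.
apply/subspace_continuousP => s As Q /(mc _ (pAB s As)).
rewrite !nbhs_simpl /within /= => /(pc s As); rewrite !nbhs_simpl /within /=.
by apply: filterS => r /= mpQ Ar; exact: mpQ Ar (pAB r Ar).
Qed.

Lemma cvg_within_closure_eq (A B E : set T) (f g : T -> U) (z : T) :
  hausdorff_space U -> E `<=` A -> E `<=` B -> closure E z ->
  (forall w, E w -> f w = g w) ->
  f @ within A (nbhs z) --> f z -> g @ within B (nbhs z) --> g z -> f z = g z.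
Proof.
move=> U_T2 EA EB clEz fg fz gz.
have PE := within_nbhs_proper clEz.
apply: (cvg_unique U_T2 (F := f @ within E (nbhs z))).
- by apply: cvg_trans fz; apply: cvg_app; exact: within_subset.
- have fgE : f @ within E (nbhs z) --> g @ within E (nbhs z).
    by apply: near_eq_cvg; rewrite near_withinE; apply: nearW => w /fg.
  apply: cvg_trans fgE _; apply: cvg_trans gz; apply: cvg_app.
  exact: within_subset.
Qed.

Lemma closure_within_continuous_eq (X E G : set T) (g m : T -> U) (z : T) :
  hausdorff_space U -> closed X -> E `<=` X -> E `<=` G -> closure E z ->
  {within X, continuous m} -> (forall w, E w -> g w = m w) ->
  g @ within G (nbhs z) --> g z -> g z = m z.
Proof.
move=> U_T2 cX EX EG clEz mc gm gz.
have Xz : X z by rewrite (closure_id X).1 //; exact: (closureS EX) _ clEz.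
apply: (cvg_within_closure_eq (E := E) (B := X)) gm gz _ => //.
exact: (subspace_continuousP _ _).1 mc z Xz.
Qed.

End ContinuityWithin.

Lemma locally_comonotone_comp {R : realFieldType} {S T : topologicalType}
    (A : set S) (B : set T) (p : S -> T) (f h : T -> R) :
  {within A, continuous p} -> (forall s, A s -> B (p s)) ->
  locally_comonotone B f h -> locally_comonotone A (f \o p) (h \o p).
Proof.
move=> /subspace_continuousP pc pAB com t At.
move: (pc t At _ (com _ (pAB t At))); rewrite !nbhs_simpl /within /=.
by apply: filterS => s /= fhs As; exact: fhs As (pAB s As).
Qed.

Lemma closure_itvco_sup {R : realFieldType} (a b : R) :
  a < b -> closure `[a, b[ b.
Proof.
move=> ab B /(filterI (lt_nbhsr ab)) aB.
have : closure [set x | x < b] b by rewrite closure_lt /=.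
move=> /(_ _ aB) [s [sb [a_s Bs]]]; exists s; split => //=.
by rewrite in_itv /= sb (ltW a_s).
Qed.

Lemma itv_comonotone_endpoint {R : realType} (a b c : R) (f h : R -> R) :
  a < b -> {within `[a, b], continuous f} -> {within `[a, b], continuous h} ->
  locally_comonotone `[a, b[ f h ->
  (forall t, t \in `[a, b[ -> f t = c \/ h t = c) ->
  f b = f a /\ h b = h a.
Proof.
move=> ab fc hc com fh.
have sub_ab : `[a, b[ `<=` `[a, b] by apply: subset_itvl; rewrite bnd_simp.
have ab_a : `[a, b[%classic a by rewrite /= in_itv /= lexx ab.
have ab_b : `[a, b]%classic b by rewrite /= in_itv /= lexx (ltW ab).
have connected_ab : connected `[a, b[.
  by apply/connected_intervalP; exact: interval_is_interval.
have fh_const := connected_comonotone_const connected_ab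
  (continuous_subspaceW sub_ab fc) (continuous_subspaceW sub_ab hc) com fh.
have endpoint (g : R -> R) : {within `[a, b], continuous g} ->
    (forall t, t \in `[a, b[ -> g t = g a) -> g b = g a.
  move=> gc ga; apply: (cvg_within_closure_eq (A := `[a, b]) (B := `[a, b[)
    (E := `[a, b[) (g := cst (g a))) => //.
  - exact: closure_itvco_sup.
  - exact: (subspace_continuousP _ _).1 gc b ab_b.
  - exact: cvg_cst.
by split; apply: endpoint => // t abt; have [] := fh_const t a abt ab_a.
Qed.

Section Frontier.
Context {R : realType} {n : nat}.

Lemma obsCEF_eq (X1 : set 'rV[R]_n) (m0 m1 : 'rV[R]_n -> R) (z : 'rV[R]_n) c :
  obsCEF X1 m0 m1 z = c -> m1 z = c \/ m0 z = c.
Proof. by rewrite /obsCEF; case: asboolP; [left | right]. Qed.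

Lemma obsCEF_in (X1 : set 'rV[R]_n) (m0 m1 : 'rV[R]_n -> R) (z : 'rV[R]_n) :
  X1 z -> obsCEF X1 m0 m1 z = m1 z.
Proof. by move=> X1z; rewrite /obsCEF asboolT. Qed.

Lemma obsCEF_notin (X1 : set 'rV[R]_n) (m0 m1 : 'rV[R]_n -> R) (z : 'rV[R]_n) :
  ~ X1 z -> obsCEF X1 m0 m1 z = m0 z.
Proof. by move=> X1z; rewrite /obsCEF asboolF. Qed.

Lemma frontier_set_closure1 (X0 X1 : set 'rV[R]_n) :
  frontier_set X0 X1 `<=` closure X1.
Proof. by move=> z [+ _]; apply: closureS; exact: interior_subset. Qed.

Lemma frontier_set_closure0 (X0 X1 : set 'rV[R]_n) :
  frontier_set X0 X1 `<=` closure X0.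
Proof. by move=> z [_]; apply: closureS; exact: interior_subset. Qed.

End Frontier.

Lemma xsnd_fiber_comonotone {R : realType} {n1 n2 : nat}
    (X : set 'rV[R]_(n1 + n2)) (m0 m1 : 'rV[R]_(n1 + n2) -> R) v :
  (forall z1, X z1 -> exists2 N, nbhs z1 N &
     forall z2, N z2 -> X z2 -> xsnd z2 = xsnd z1 ->
       (m1 z2 <= m1 z1 <-> m0 z2 <= m0 z1)) ->
  locally_comonotone [set z | X z /\ xsnd z = v] m1 m0.
Proof.
move=> como z [Xz zv]; have [N Nz comN] := como z Xz.
by apply: filterS Nz => w Nw [Xw wv]; apply: comN => //; rewrite wv zv.
Qed.

Theorem theoremB3 (R : realType) (n1 n2 : nat)
  (X X0 X1 : set 'rV[R]_(n1 + n2))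
  (m0 m1 g0 g1 : 'rV[R]_(n1 + n2) -> R)
  (d : bool) (x xs : 'rV[R]_(n1 + n2)) (p : R -> 'rV[R]_(n1 + n2)) :
  (* X is the support of the covariate vector: closed, X = X0 ∪ X1 disjoint *)
  closed X -> X = X0 `|` X1 -> X0 `&` X1 = set0 ->
  (* continuity of the CEFs x |-> E[Y(d)|X=x] on X *)
  {within X, continuous m0} -> {within X, continuous m1} ->
  (* conditional local comonotonicity *)
  (forall z1, X z1 -> exists2 N, nbhs z1 N &
     forall z2, N z2 -> X z2 -> xsnd z2 = xsnd z1 ->
       (m1 z2 <= m1 z1 <-> m0 z2 <= m0 z1)) ->
  (* g_d = E[Y|X=.] on X_d and continuous (on X_d ∪ F) at each point of F *)
  (forall z, X0 z -> g0 z = obsCEF X1 m0 m1 z) ->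
  (forall z, X1 z -> g1 z = obsCEF X1 m0 m1 z) ->
  (forall z, frontier_set X0 X1 z ->
     g0 @ within (X0 `|` frontier_set X0 X1) (nbhs z) --> g0 z) ->
  (forall z, frontier_set X0 X1 z ->
     g1 @ within (X1 `|` frontier_set X0 X1) (nbhs z) --> g1 z) ->
  (* the path *)
  (if d then X1 else X0) x ->
  {within `[0, 1], continuous p} ->
  (forall t, t \in `[0, 1] -> ((if d then X1 else X0) `|` frontier_set X0 X1) (p t)) ->
  p 0 = x -> p 1 = xs -> frontier_set X0 X1 xs ->
  (forall t, t \in `[0, 1] -> xsnd (p t) = xsnd x) ->
  (forall t, t \in `]0, 1[ -> obsCEF X1 m0 m1 (p t) = obsCEF X1 m0 m1 x) ->
  m1 x = g1 xs /\ m0 x = g0 xs.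
Proof.
move=> cX XE X01 m0c m1c como g0E g1E g0c g1c _ pc pD p0 p1 Fxs pfib pobs.
have X0X : X0 `<=` X by rewrite XE; exact: subsetUl.
have X1X : X1 `<=` X by rewrite XE; exact: subsetUr.
have g1m1 w : X1 w -> g1 w = m1 w by move=> X1w; rewrite g1E // obsCEF_in.
have g0m0 w : X0 w -> g0 w = m0 w.
  move=> X0w; rewrite g0E // obsCEF_notin // => X1w.
  by have : (X0 `&` X1) w by []; rewrite X01.
rewrite (closure_within_continuous_eq (@Rhausdorff R) cX X1X (@subsetUl _ _ _)
  (frontier_set_closure1 Fxs) m1c g1m1 (g1c _ Fxs)).
rewrite (closure_within_continuous_eq (@Rhausdorff R) cX X0X (@subsetUl _ _ _)
  (frontier_set_closure0 Fxs) m0c g0m0 (g0c _ Fxs)).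
have pX t : t \in `[0, 1] -> X (p t).
  move=> /pD [|/frontier_set_closure1 /(closureS X1X)].
    by case: (d) => [/X1X | /X0X].
  by rewrite -(closure_id X).1.
have sub01 : `[0, 1[ `<=` (`[0, 1] : set R) by apply: subset_itvl; rewrite bnd_simp.
have p_fiber t : `[0, 1[%classic t -> [set z | X z /\ xsnd z = xsnd x] (p t).
  by move=> /sub01 t01; split; [exact: pX | exact: pfib].
have [] := itv_comonotone_endpoint (c := obsCEF X1 m0 m1 x) ltr01
  (within_continuous_comp_within pc pX m1c)
  (within_continuous_comp_within pc pX m0c)
  (locally_comonotone_comp (continuous_subspaceW sub01 pc) p_fiber
     (xsnd_fiber_comonotone como)).
- move=> t; rewrite in_itv /= => /andP[t_ge0 t_lt1].
  have obs_t : obsCEF X1 m0 m1 (p t) = obsCEF X1 m0 m1 x.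
    have [->|t_neq0] := eqVneq t 0; first by rewrite p0.
    by apply: pobs; rewrite in_itv /= t_lt1 lt_neqAle eq_sym t_neq0 t_ge0.
  exact: obsCEF_eq obs_t.
- by rewrite /= p0 p1 => -> ->.
Qed.
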